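(* Let $(G,\omega,\mu)$ be an infinite, connected weighted graph, and let $d$ be a pseudo metric on $G$ which is intrinsic, is also $1$-intrinsic with bound $C_0>0$, has finite jump size $s$, and has finite balls. Let $V:G\to\mathbb{R}$ satisfy $c_0:=\inf_G V>0$. Let $u$ be a solution of $\Delta u - Vu=0$ in $G$. Let $p\ge1$ and $\alpha>0$ be such that $$C_0\,\alpha\, e^{s\alpha} < c_0 p.$$ Fix $x_0\in G$ and suppose $u\in\ell^p_{\varphi_\alpha}(G,\mu)$, where $\varphi_\alpha(x)=e^{-\alpha d(x,x_0)}$. Then $u(x)=0$ for all $x\in G$.
   Context: A weighted graph $(G,\omega,\mu)$: $G$ countable, $\mu:G\to(0,\infty)$, $\omega:G\times G\to[0,\infty)$ symmetric with $\omega(x,x)=0$ and $\sum_y\omega(x,y)<\infty$; $x\sim y$ iff $\omega(x,y)>0$; connected means any two vertices are joined by a finite path. Laplacian $\Delta f(x)=\frac{1}{\mu(x)}\sum_{y}[f(y)-f(x)]\omega(x,y)$. A pseudo metric $d$ is a symmetric nonnegative function with $d(x,x)=0$ satisfying the triangle inequality. Jump size $s:=\sup\{d(x,y):\omega(x,y)>0\}$. For $q\ge1$, $C_0>0$, $d$ is $q$-intrinsic with bound $C_0$ if $\frac{1}{\mu(x)}\sum_y\omega(x,y)d^q(x,y)\le C_0$ for all $x$; intrinsic means $2$-intrinsic with bound $1$. $B_r(x)=\{y:d(y,x)<r\}$; finite balls means each $B_r(x)$ is finite. For $\varphi:G\to(0,\infty)$, $\ell^p_\varphi(G,\mu)=\{u:\sum_x|u(x)|^p\varphi(x)\mu(x)<\infty\}$.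 *)

From Stdlib Require Import Reals List Lra.
Open Scope R_scope.

Definition fin_sum {T : Type} (f : T -> R) (L : list T) : R :=
  fold_right (fun x acc => f x + acc) 0 L.

(* Unconditional summation over an arbitrary (countable) index type:
   the net of finite partial sums (over finite subsets, given as
   duplicate-free lists) converges to S. For real series this is
   absolute summability with sum S. *)
Definition has_sum {T : Type} (f : T -> R) (S : R) : Prop :=
  forall eps, 0 < eps ->
    exists L0 : list T, forall L : list T,
      NoDup L -> incl L0 L -> Rabs (fin_sum f L - S) < eps.

(* For nonnegative f: "sum_x f x <= C" (sum = sup of finite partial sums). *)
Definition sum_le {T : Type} (f : T -> R) (C : R) : Prop :=
  forall L : list T, NoDup L -> fin_sum f L <= C.

(* Real power of a nonnegative number, with 0^q = 0 (q > 0). *)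
Definition rpow (x q : R) : R :=
  if Rle_dec x 0 then 0 else Rpower x q.

Definition countable_type (G : Type) : Prop :=
  exists f : G -> nat, forall x y, f x = f y -> x = y.

Definition infinite_type (G : Type) : Prop :=
  exists f : nat -> G, forall m n, f m = f n -> m = n.

Definition weighted_graph {G : Type} (w : G -> G -> R) (mu : G -> R) : Prop :=
  countable_type G /\
  (forall x, 0 < mu x) /\
  (forall x y, 0 <= w x y) /\
  (forall x y, w x y = w y x) /\
  (forall x, w x x = 0) /\
  (forall x, exists S, has_sum (w x) S).

Fixpoint is_path {G : Type} (w : G -> G -> R) (x : G) (l : list G) (y : G)
  : Prop :=
  match l with
  | nil => x = y
  | z :: l' => 0 < w x z /\ is_path w z l' y
  end.

Definition connected {G : Type} (w : G -> G -> R) : Prop :=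
  forall x y : G, exists l, is_path w x l y.

Definition pseudo_metric {G : Type} (d : G -> G -> R) : Prop :=
  (forall x y, 0 <= d x y) /\
  (forall x, d x x = 0) /\
  (forall x y, d x y = d y x) /\
  (forall x y z, d x z <= d x y + d y z).

Definition q_intrinsic {G : Type} (w : G -> G -> R) (mu : G -> R)
  (d : G -> G -> R) (q C0 : R) : Prop :=
  forall x, sum_le (fun y => w x y * rpow (d x y) q) (C0 * mu x).

Definition intrinsic {G : Type} w mu (d : G -> G -> R) : Prop :=
  @q_intrinsic G w mu d 2 1.

Definition jump_size {G : Type} (w d : G -> G -> R) (s : R) : Prop :=
  is_lub (fun r => exists x y, 0 < w x y /\ r = d x y) s.

Definition finite_balls {G : Type} (d : G -> G -> R) : Prop :=
  forall x r, exists L : list G, forall y, d y x < r -> In y L.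

Definition is_inf {G : Type} (V : G -> R) (c0 : R) : Prop :=
  (forall x, c0 <= V x) /\ (forall c, (forall x, c <= V x) -> c <= c0).

Definition laplacian_at {G : Type} (w : G -> G -> R) (mu : G -> R)
  (u : G -> R) (x : G) (L : R) : Prop :=
  exists S, has_sum (fun y => (u y - u x) * w x y) S /\ L = S / mu x.

Definition solves_schrodinger {G : Type} w mu (V u : G -> R) : Prop :=
  forall x : G, @laplacian_at G w mu u x (V x * u x).

Definition in_lp_weighted {G : Type} (mu : G -> R) (p : R)
  (phi u : G -> R) : Prop :=
  exists M, sum_le (fun x => rpow (Rabs (u x)) p * phi x * mu x) M.

(* Since V >= c0 and t |-> t^p is convex, f := |u|^p satisfies Delta f >= c0 p f.
   Test this against psi := exp (-alpha d(., x0)) * eta_R, where the cutoff eta_R is 1 on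
   the ball of radius R and vanishes outside the ball of radius 2R, and sum by parts.  Along
   an edge (of length at most s) psi grows by at most
   (alpha e^(s alpha) + 1/R) exp (-alpha d(x, x0)) d(x, y), so the 1-intrinsic bound gives
   c0 p F_R <= (alpha e^(s alpha) + 1/R) C0 F, where F is the weighted l^p sum of u and F_R
   its part over the ball of radius R.  Letting R grow, c0 p F <= C0 alpha e^(s alpha) F,
   which forces F = 0. *)

From Stdlib Require Import Reals List Lra.
Open Scope R_scope.

Section FinSum.
Context {T : Type}.
Implicit Types (f g : T -> R) (L : list T).

Lemma fin_sum_ext f g L :
  (forall x, In x L -> f x = g x) -> fin_sum f L = fin_sum g L.
Proof.
  induction L as [|a L IH]; intros H; simpl; auto.
  rewrite (H a (in_eq a L)), IH; auto.
  intros x Hx; apply H, in_cons, Hx.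
Qed.

Lemma fin_sum_le f g L :
  (forall x, In x L -> f x <= g x) -> fin_sum f L <= fin_sum g L.
Proof.
  induction L as [|a L IH]; intros H; simpl; [lra|].
  assert (f a <= g a) by apply H, in_eq.
  assert (fin_sum f L <= fin_sum g L) by (apply IH; intros x Hx; apply H, in_cons, Hx).
  lra.
Qed.

Lemma fin_sum_nonneg f L : (forall x, In x L -> 0 <= f x) -> 0 <= fin_sum f L.
Proof.
  induction L as [|a L IH]; intros H; simpl; [lra|].
  assert (0 <= f a) by apply H, in_eq.
  assert (0 <= fin_sum f L) by (apply IH; intros x Hx; apply H, in_cons, Hx).
  lra.
Qed.

Lemma fin_sum_minus f g L :
  fin_sum (fun x => f x - g x) L = fin_sum f L - fin_sum g L.
Proof. induction L; simpl; [lra|rewrite IHL; lra]. Qed.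

Lemma fin_sum_scal (c : R) f L :
  fin_sum (fun x => c * f x) L = c * fin_sum f L.
Proof. induction L; simpl; [lra|rewrite IHL; lra]. Qed.

Lemma fin_sum_app f L1 L2 : fin_sum f (L1 ++ L2) = fin_sum f L1 + fin_sum f L2.
Proof. induction L1; simpl; [lra|rewrite IHL1; lra]. Qed.

Lemma fin_sum_swap (h : T -> T -> R) L1 L2 :
  fin_sum (fun x => fin_sum (h x) L2) L1 =
  fin_sum (fun y => fin_sum (fun x => h x y) L1) L2.
Proof.
  induction L1 as [|a L1 IH]; simpl.
  - induction L2; simpl; lra.
  - rewrite IH. clear IH. induction L2; simpl; lra.
Qed.

Lemma fin_sum_incl f L' L :
  (forall x, 0 <= f x) -> NoDup L' -> incl L' L -> fin_sum f L' <= fin_sum f L.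
Proof.
  revert L; induction L' as [|a L' IH]; intros L Hf Hnd Hinc; simpl.
  - now apply fin_sum_nonneg.
  - inversion_clear Hnd as [|? ? Ha HL'].
    destruct (in_split a L (Hinc a (in_eq a L'))) as [L1 [L2 ->]].
    assert (fin_sum f L' <= fin_sum f (L1 ++ L2)).
    { apply IH; auto. intros z Hz.
      destruct (in_app_or _ _ _ (Hinc z (in_cons a z L' Hz))) as [?|[<-|?]];
        auto using in_or_app; contradiction. }
    rewrite fin_sum_app in *; simpl; lra.
Qed.

Lemma fin_sum_le_length f (K L : list T) :
  NoDup L -> (forall x, 0 <= f x <= 1) -> (forall x, f x <> 0 -> In x K) ->
  fin_sum f L <= INR (length K).
Proof.
  intros Hnd Hf HK.
  set (nz := fun x => if Req_EM_T (f x) 0 then false else true).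
  assert (Hfilter : fin_sum f L <= INR (length (filter nz L))).
  { clear Hnd. induction L as [|a L IH]; simpl fin_sum; simpl filter; [simpl; lra|].
    unfold nz at 1; destruct (Req_EM_T (f a) 0) as [E|E].
    - rewrite E; lra.
    - simpl length; rewrite S_INR. specialize (Hf a). lra. }
  apply (Rle_trans _ _ _ Hfilter), le_INR, NoDup_incl_length.
  - now apply NoDup_filter.
  - intros x Hx. apply filter_In in Hx as [_ Hx]. apply HK.
    unfold nz in Hx. now destruct (Req_EM_T (f x) 0).
Qed.

End FinSum.

(* The filter along which [has_sum] converges: [has_sum f S] unfolds to
   [forall eps, 0 < eps -> eventually_incl (fun L => Rabs (fin_sum f L - S) < eps)]. *)
Definition eventually_incl {T : Type} (P : list T -> Prop) : Prop :=
  exists L0, forall L, NoDup L -> incl L0 L -> P L.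

Lemma eventually_incl_forall_in {T : Type} (P : T -> list T -> Prop) (K : list T) :
  (forall x, In x K -> eventually_incl (P x)) ->
  eventually_incl (fun L => forall x, In x K -> P x L).
Proof.
  induction K as [|a K IH]; intros H.
  - exists nil; intros L _ _ x [].
  - destruct (H a (in_eq a K)) as [La HLa].
    destruct IH as [Lb HLb]; [intros x Hx; apply H, in_cons, Hx|].
    exists (La ++ Lb); intros L Hnd Hinc x [<-|Hx].
    + apply HLa; auto. intros z Hz; apply Hinc, in_or_app; auto.
    + apply HLb; auto. intros z Hz; apply Hinc, in_or_app; auto.
Qed.

Lemma eventually_incl_witness {T : Type} (dec : forall x y : T, {x = y} + {x <> y})
  (P : list T -> Prop) (L' : list T) :
  eventually_incl P -> exists L, NoDup L /\ incl L' L /\ P L.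
Proof.
  intros [L0 HL0]. exists (nodup dec (L0 ++ L')).
  assert (Hincl : forall z, In z (L0 ++ L') -> In z (nodup dec (L0 ++ L')))
    by (intros z; apply nodup_In).
  repeat split; [apply NoDup_nodup| |apply HL0; [apply NoDup_nodup|]];
    intros z Hz; apply Hincl, in_or_app; auto.
Qed.

Lemma exp_le_compat x y : x <= y -> exp x <= exp y.
Proof.
  intros [H| ->]; [now left; apply exp_increasing | lra].
Qed.

Lemma exp_sub_one_le t : 0 <= t -> exp t - 1 <= t * exp t.
Proof.
  intros Ht. pose proof (exp_ineq1_le (- t)) as H1.
  assert (exp (- t) * exp t = 1)
    by (rewrite <- exp_plus, Rplus_opp_l; apply exp_0).
  pose proof (exp_pos t). nra.
Qed.

Lemma Rpower_1_l y : Rpower 1 y = 1.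
Proof. unfold Rpower; rewrite ln_1, Rmult_0_r; apply exp_0. Qed.

Lemma Rpower_gt0 x y : 0 < Rpower x y.
Proof. apply exp_pos. Qed.

Lemma Rpower_pred_mul a p : 0 < a -> Rpower a (p - 1) * a = Rpower a p.
Proof.
  intros Ha. rewrite <- (Rpower_1 a) at 2 by exact Ha.
  rewrite <- Rpower_plus; f_equal; ring.
Qed.

(* [t^p - p t] is minimal at [t = 1]: its derivative [p (t^(p-1) - 1)] has the sign of [t - 1]. *)
Lemma Rpower_bernoulli z p : 0 < z -> 1 <= p -> 1 + p * (z - 1) <= Rpower z p.
Proof.
  intros Hz Hp.
  set (h := fun t => Rpower t p - p * t).
  set (h' := fun t => p * Rpower t (p - 1) - p * 1).
  assert (Hd : forall c, 0 < c -> derivable_pt_lim h c (h' c)).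
  { intros c Hc. apply derivable_pt_lim_minus.
    - now apply derivable_pt_lim_power.
    - apply derivable_pt_lim_scal, derivable_pt_lim_id. }
  assert (Hh1 : h 1 = 1 - p) by (unfold h; rewrite Rpower_1_l; lra).
  enough (1 - p <= h z) by (unfold h in *; lra).
  destruct (Rtotal_order z 1) as [Hlt|[ ->|Hgt]]; [| lra |].
  - destruct (MVT_cor2 h h' z 1 Hlt) as [c [Hc Hcz]]; [intros c Hc; apply Hd; lra|].
    assert (Rpower c (p - 1) <= Rpower 1 (p - 1)) by (apply Rle_Rpower_l; lra).
    rewrite Rpower_1_l in *.
    assert (0 <= (p - p * Rpower c (p - 1)) * (1 - z)) by (apply Rmult_le_pos; nra).
    unfold h' in Hc. lra.
  - destruct (MVT_cor2 h h' 1 z Hgt) as [c [Hc Hcz]]; [intros c Hc; apply Hd; lra|].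
    assert (Rpower 1 (p - 1) <= Rpower c (p - 1)) by (apply Rle_Rpower_l; lra).
    rewrite Rpower_1_l in *.
    assert (0 <= (p * Rpower c (p - 1) - p) * (z - 1)) by (apply Rmult_le_pos; nra).
    unfold h' in Hc. lra.
Qed.

Lemma rpow_nonneg x q : 0 <= rpow x q.
Proof. unfold rpow; destruct Rle_dec; [lra | left; apply exp_pos]. Qed.

Lemma rpow_pos x q : 0 < x -> rpow x q = Rpower x q.
Proof. intros Hx; unfold rpow; destruct Rle_dec; [lra | reflexivity]. Qed.

Lemma rpow_1 x : 0 <= x -> rpow x 1 = x.
Proof.
  intros Hx; unfold rpow; destruct Rle_dec; [lra | now apply Rpower_1; lra].
Qed.

Lemma rpow_abs_eq0 a q : rpow (Rabs a) q = 0 -> a = 0.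
Proof.
  unfold rpow; destruct Rle_dec as [Ha|Ha].
  - intros _. destruct (Req_dec a 0) as [|Hnz]; [assumption|].
    pose proof (Rabs_pos_lt a Hnz); lra.
  - intros H; pose proof (Rpower_gt0 (Rabs a) q); lra.
Qed.

Lemma rpow_tangent a t p : 0 < a -> 0 <= t -> 1 <= p ->
  p * Rpower a (p - 1) * (t - a) <= rpow t p - Rpower a p.
Proof.
  intros Ha Ht Hp.
  rewrite <- (Rpower_pred_mul a p Ha).
  pose proof (Rpower_gt0 a (p - 1)).
  destruct (Req_dec t 0) as [ ->|Ht0].
  - unfold rpow; destruct Rle_dec; [|lra].
    assert (0 <= (p - 1) * (Rpower a (p - 1) * a)) by (apply Rmult_le_pos; nra). nra.
  - rewrite rpow_pos by lra.
    replace t with (a * (t / a)) at 2 by (field; lra).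
    rewrite <- Rpower_mult_distr by (try apply Rdiv_lt_0_compat; lra).
    rewrite <- (Rpower_pred_mul a p Ha).
    pose proof (Rpower_bernoulli (t / a) p ltac:(apply Rdiv_lt_0_compat; lra) Hp).
    replace (p * Rpower a (p - 1) * (t - a))
      with (Rpower a (p - 1) * a * (p * (t / a - 1))) by (field; lra).
    assert (0 < Rpower a (p - 1) * a) by nra. nra.
Qed.

Lemma Rabs_sign a : a <> 0 -> Rabs (a / Rabs a) = 1.
Proof.
  intros Ha; pose proof (Rabs_pos_lt a Ha).
  unfold Rdiv; rewrite Rabs_mult, Rabs_inv, Rabs_Rabsolu; field; lra.
Qed.

Lemma Rmult_sign a : a <> 0 -> a * (a / Rabs a) = Rabs a.
Proof.
  intros Ha; pose proof (Rabs_pos_lt a Ha).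
  assert (Hsq : a * a = Rabs a * Rabs a)
    by (rewrite <- Rabs_mult; symmetry; apply Rabs_pos_eq; nra).
  unfold Rdiv; rewrite <- Rmult_assoc, Hsq; field; lra.
Qed.

Lemma abs_rpow_tangent a b p : a <> 0 -> 1 <= p ->
  p * Rpower (Rabs a) (p - 1) * ((b - a) * (a / Rabs a))
  <= rpow (Rabs b) p - Rpower (Rabs a) p.
Proof.
  intros Ha Hp.
  assert (Hb : b * (a / Rabs a) <= Rabs b).
  { rewrite <- (Rmult_1_r (Rabs b)), <- (Rabs_sign a Ha), <- Rabs_mult. apply Rle_abs. }
  pose proof (Rmult_sign a Ha).
  eapply Rle_trans; [|apply rpow_tangent; auto using Rabs_pos, Rabs_pos_lt].
  apply Rmult_le_compat_l; [pose proof (Rpower_gt0 (Rabs a) (p - 1)); nra | lra].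
Qed.

Lemma has_sum_scal_lower {T : Type} (h : T -> R) (S k : R) :
  has_sum h S -> forall eps, 0 < eps ->
  eventually_incl (fun L => k * S - eps <= k * fin_sum h L).
Proof.
  intros HS eps Heps.
  pose proof (Rabs_pos k).
  destruct (HS (eps / (Rabs k + 1))) as [L0 HL0]; [apply Rdiv_lt_0_compat; lra|].
  exists L0; intros L Hnd Hinc; specialize (HL0 L Hnd Hinc).
  assert (Hk : Rabs (k * (fin_sum h L - S)) <= eps).
  { rewrite Rabs_mult.
    apply Rle_trans with (Rabs k * (eps / (Rabs k + 1))); [apply Rmult_le_compat_l; lra|].
    apply Rmult_le_reg_r with (Rabs k + 1); [lra|].
    replace (Rabs k * (eps / (Rabs k + 1)) * (Rabs k + 1)) with (Rabs k * eps) by (field; lra).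
    nra. }
  pose proof (Rle_abs (- (k * (fin_sum h L - S)))) as Hle; rewrite Rabs_Ropp in Hle.
  lra.
Qed.

(* Convexity of [t |-> t^p] turns [Delta u = V u] into [Delta |u|^p >= p V |u|^p]. *)
Lemma abs_rpow_subharmonic {G : Type} (w : G -> G -> R) (mu V u : G -> R)
  (c0 p : R) (x : G) :
  (forall y, 0 <= w x y) -> 0 < mu x -> c0 <= V x -> 1 <= p ->
  laplacian_at w mu u x (V x * u x) ->
  forall eps, 0 < eps -> eventually_incl (fun L =>
    c0 * p * mu x * rpow (Rabs (u x)) p - eps <=
    fin_sum (fun y => w x y * (rpow (Rabs (u y)) p - rpow (Rabs (u x)) p)) L).
Proof.
  intros Hw Hmu HV Hp [S [HS HSV]] eps Heps.
  set (f := fun y => rpow (Rabs (u y)) p).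
  change (eventually_incl (fun L =>
    c0 * p * mu x * f x - eps <= fin_sum (fun y => w x y * (f y - f x)) L)).
  destruct (Req_dec (u x) 0) as [Hu0|Hu0].
  - exists nil; intros L _ _.
    assert (Hf0 : f x = 0) by (unfold f, rpow; rewrite Hu0, Rabs_R0; destruct Rle_dec; lra).
    rewrite Hf0.
    assert (0 <= fin_sum (fun y => w x y * (f y - 0)) L); [|lra].
    apply fin_sum_nonneg; intros y _.
    pose proof (Hw y); pose proof (rpow_nonneg (Rabs (u y)) p); unfold f; nra.
  - set (a := Rabs (u x)); set (sg := u x / a); set (B := p * Rpower a (p - 1)).
    assert (Ha : 0 < a) by now apply Rabs_pos_lt.
    destruct (has_sum_scal_lower _ S (B * sg) HS eps Heps) as [L0 HL0].
    exists L0; intros L Hnd Hinc; specialize (HL0 L Hnd Hinc).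
    assert (Hterm : B * sg * fin_sum (fun y => (u y - u x) * w x y) L
                    <= fin_sum (fun y => w x y * (f y - f x)) L).
    { rewrite <- fin_sum_scal. apply fin_sum_le; intros y _.
      pose proof (abs_rpow_tangent (u x) (u y) p Hu0 Hp) as Ht.
      unfold f; rewrite (rpow_pos a) by exact Ha.
      specialize (Hw y). fold a sg B in Ht. nra. }
    assert (HBS : B * sg * S = p * V x * mu x * Rpower a p).
    { replace S with (V x * u x * mu x) by (rewrite HSV; field; lra).
      unfold B, sg; rewrite <- (Rpower_pred_mul a p Ha).
      replace (p * Rpower a (p - 1) * (u x / a) * (V x * u x * mu x))
        with (p * Rpower a (p - 1) * (u x * (u x / a)) * V x * mu x) by ring.
      unfold a; rewrite Rmult_sign by exact Hu0. ring. }
    assert (c0 * p * mu x * Rpower a p <= p * V x * mu x * Rpower a p).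
    { pose proof (Rpower_gt0 a p).
      assert (0 <= (V x - c0) * (p * mu x * Rpower a p))
        by (apply Rmult_le_pos; [lra | apply Rmult_le_pos; nra]).
      nra. }
    unfold f at 1; fold a; rewrite rpow_pos by exact Ha. lra.
Qed.

Definition clamp01 (t : R) : R := Rmin 1 (Rmax 0 t).

Lemma clamp01_range t : 0 <= clamp01 t <= 1.
Proof. unfold clamp01, Rmin, Rmax; repeat destruct Rle_dec; lra. Qed.

Lemma clamp01_lipschitz t1 t2 : clamp01 t1 - clamp01 t2 <= Rabs (t1 - t2).
Proof. unfold clamp01, Rmin, Rmax, Rabs; repeat destruct Rle_dec; destruct Rcase_abs; lra. Qed.

Lemma clamp01_ge1 t : 1 <= t -> clamp01 t = 1.
Proof. unfold clamp01, Rmin, Rmax; repeat destruct Rle_dec; lra. Qed.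

Lemma clamp01_le0 t : t <= 0 -> clamp01 t = 0.
Proof. unfold clamp01, Rmin, Rmax; repeat destruct Rle_dec; lra. Qed.

Definition cutoff (r t : R) : R := clamp01 ((2 * r - t) / r).

Lemma cutoff_range r t : 0 <= cutoff r t <= 1.
Proof. apply clamp01_range. Qed.

Lemma cutoff_inner r t : 0 < r -> t <= r -> cutoff r t = 1.
Proof.
  intros Hr Ht; apply clamp01_ge1.
  apply Rmult_le_reg_r with r; [lra|]. unfold Rdiv; rewrite Rmult_assoc, Rinv_l; lra.
Qed.

Lemma cutoff_outer r t : 0 < r -> 2 * r <= t -> cutoff r t = 0.
Proof.
  intros Hr Ht; apply clamp01_le0.
  apply Rmult_le_reg_r with r; [lra|]. unfold Rdiv; rewrite Rmult_assoc, Rinv_l; lra.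
Qed.

Lemma cutoff_increment r tx ty : 0 < r ->
  cutoff r ty - cutoff r tx <= Rabs (tx - ty) / r.
Proof.
  intros Hr. eapply Rle_trans; [apply clamp01_lipschitz|].
  replace ((2 * r - ty) / r - (2 * r - tx) / r) with ((tx - ty) / r) by (field; lra).
  unfold Rdiv; rewrite Rabs_mult, (Rabs_pos_eq (/ r)) by (left; now apply Rinv_0_lt_compat).
  lra.
Qed.

Lemma exp_neg_increment alpha s tx ty delta : 0 < alpha -> 0 <= delta <= s ->
  tx <= ty + delta ->
  exp (- alpha * ty) - exp (- alpha * tx) <= alpha * exp (s * alpha) * delta * exp (- alpha * tx).
Proof.
  intros Ha Hd Ht.
  assert (exp (- alpha * ty) <= exp (- alpha * tx) * exp (alpha * delta))
    by (rewrite <- exp_plus; apply exp_le_compat; nra).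
  assert (exp (alpha * delta) - 1 <= alpha * delta * exp (s * alpha)).
  { assert (exp (alpha * delta) <= exp (s * alpha)) by (apply exp_le_compat; nra).
    pose proof (exp_sub_one_le (alpha * delta)). assert (0 <= alpha * delta) by nra. nra. }
  pose proof (exp_pos (- alpha * tx)). nra.
Qed.

Lemma weighted_cutoff_range alpha r t : 0 < alpha -> 0 <= t ->
  0 <= exp (- alpha * t) * cutoff r t <= 1.
Proof.
  intros Ha Ht. pose proof (exp_pos (- alpha * t)); pose proof (cutoff_range r t).
  assert (exp (- alpha * t) <= 1) by (rewrite <- exp_0; apply exp_le_compat; nra).
  nra.
Qed.

Lemma weighted_cutoff_increment alpha s r tx ty delta :
  0 < alpha -> 0 < r -> 0 <= delta <= s -> Rabs (tx - ty) <= delta ->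
  exp (- alpha * ty) * cutoff r ty - exp (- alpha * tx) * cutoff r tx
  <= (alpha * exp (s * alpha) + / r) * exp (- alpha * tx) * delta.
Proof.
  intros Ha Hr Hd Ht.
  pose proof (exp_pos (- alpha * tx)). pose proof (cutoff_range r ty).
  assert (Hexp := exp_neg_increment alpha s tx ty delta Ha Hd
                    ltac:(pose proof (Rle_abs (tx - ty)); lra)).
  assert (Hcut : exp (- alpha * tx) * (cutoff r ty - cutoff r tx)
                 <= exp (- alpha * tx) * (delta / r)).
  { apply Rmult_le_compat_l; [lra|]. eapply Rle_trans; [now apply cutoff_increment|].
    unfold Rdiv; apply Rmult_le_compat_r; [left; now apply Rinv_0_lt_compat | exact Ht]. }
  assert (0 <= alpha * exp (s * alpha) * delta * exp (- alpha * tx)).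
  { pose proof (exp_pos (s * alpha)). apply Rmult_le_pos; [|lra].
    apply Rmult_le_pos; [nra | lra]. }
  assert (cutoff r ty * (exp (- alpha * ty) - exp (- alpha * tx))
          <= alpha * exp (s * alpha) * delta * exp (- alpha * tx))
    by (destruct (Rle_dec 0 (exp (- alpha * ty) - exp (- alpha * tx))); nra).
  replace ((alpha * exp (s * alpha) + / r) * exp (- alpha * tx) * delta)
    with (alpha * exp (s * alpha) * delta * exp (- alpha * tx)
          + exp (- alpha * tx) * (delta / r)) by (field; lra).
  nra.
Qed.

Lemma fin_sum_green {T : Type} (w : T -> T -> R) (psi f : T -> R) (L : list T) :
  (forall x y, w x y = w y x) ->
  fin_sum (fun x => psi x * fin_sum (fun y => w x y * (f y - f x)) L) L =
  fin_sum (fun x => fin_sum (fun y => w x y * f x * (psi y - psi x)) L) L.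
Proof.
  intros Hsym.
  set (diag := fun x => fin_sum (fun y => w x y * psi x * f x) L).
  transitivity (fin_sum (fun x => fin_sum (fun y => w x y * psi x * f y) L - diag x) L).
  { apply fin_sum_ext; intros x _.
    unfold diag; rewrite <- fin_sum_minus, <- fin_sum_scal; apply fin_sum_ext; intros; ring. }
  transitivity (fin_sum (fun x => fin_sum (fun y => w x y * f x * psi y) L - diag x) L).
  { rewrite !fin_sum_minus, fin_sum_swap; f_equal.
    apply fin_sum_ext; intros x _; apply fin_sum_ext; intros y _.
    rewrite (Hsym y x); ring. }
  apply fin_sum_ext; intros x _.
  unfold diag; rewrite <- fin_sum_minus; apply fin_sum_ext; intros; ring.
Qed.

Section TestFunction.
Context {T : Type}.
Variables (w : T -> T -> R) (mu f : T -> R).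

Lemma test_function_lower (c : R) (psi : T -> R) (K : list T) :
  (forall x eps, 0 < eps -> eventually_incl (fun L =>
     c * mu x * f x - eps <= fin_sum (fun y => w x y * (f y - f x)) L)) ->
  (forall x, 0 <= psi x <= 1) -> (forall x, psi x <> 0 -> In x K) ->
  forall delta, 0 < delta -> eventually_incl (fun L =>
    c * fin_sum (fun x => psi x * f x * mu x) L - delta
    <= fin_sum (fun x => psi x * fin_sum (fun y => w x y * (f y - f x)) L) L).
Proof.
  intros Hloc Hpsi HK delta Hdelta.
  pose proof (pos_INR (length K)).
  set (eps := delta / (INR (length K) + 1)).
  assert (Heps : 0 < eps) by (apply Rdiv_lt_0_compat; lra).
  destruct (eventually_incl_forall_in _ K (fun x _ => Hloc x eps Heps)) as [L0 HL0].
  exists L0; intros L Hnd Hinc.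
  assert (Hterm : forall x, In x L ->
    c * (psi x * f x * mu x) - eps * psi x
    <= psi x * fin_sum (fun y => w x y * (f y - f x)) L).
  { intros x _. destruct (Req_dec (psi x) 0) as [E|E]; [rewrite E; lra|].
    specialize (HL0 L Hnd Hinc x (HK x E)). specialize (Hpsi x).
    assert (psi x * (c * mu x * f x - eps)
            <= psi x * fin_sum (fun y => w x y * (f y - f x)) L)
      by (apply Rmult_le_compat_l; lra).
    nra. }
  apply fin_sum_le in Hterm.
  rewrite fin_sum_minus, !fin_sum_scal in Hterm.
  assert (fin_sum psi L <= INR (length K)) by now apply fin_sum_le_length.
  assert (eps * INR (length K) <= delta).
  { unfold eps; apply Rmult_le_reg_r with (INR (length K) + 1); [lra|].
    field_simplify; lra. }
  assert (eps * fin_sum psi L <= eps * INR (length K)) by (apply Rmult_le_compat_l; lra).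
  lra.
Qed.

Lemma test_function_upper (d : T -> T -> R) (phi psi : T -> R) (k C0 : R) :
  (forall x y, 0 <= w x y) -> (forall x, 0 <= f x) -> (forall x, 0 <= phi x) ->
  (forall x y, 0 <= d x y) -> 0 <= k -> q_intrinsic w mu d 1 C0 ->
  (forall x y, 0 < w x y -> psi y - psi x <= k * phi x * d x y) ->
  forall L, NoDup L ->
  fin_sum (fun x => fin_sum (fun y => w x y * f x * (psi y - psi x)) L) L
  <= k * C0 * fin_sum (fun x => f x * phi x * mu x) L.
Proof.
  intros Hw Hf Hphi Hd Hk Hint Hpsi L HL.
  rewrite <- fin_sum_scal; apply fin_sum_le; intros x _.
  assert (Hfpk : 0 <= f x * phi x * k)
    by (apply Rmult_le_pos; [apply Rmult_le_pos|]; auto).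
  apply Rle_trans with (fin_sum (fun y => f x * phi x * k * (w x y * rpow (d x y) 1)) L).
  - apply fin_sum_le; intros y _.
    rewrite rpow_1 by apply Hd.
    destruct (Req_dec (w x y) 0) as [E|E].
    + rewrite E. pose proof (Hd x y). nra.
    + specialize (Hpsi x y ltac:(pose proof (Hw x y); lra)).
      assert (0 <= w x y * f x) by (apply Rmult_le_pos; auto).
      assert (w x y * f x * (psi y - psi x) <= w x y * f x * (k * phi x * d x y))
        by (apply Rmult_le_compat_l; auto).
      nra.
  - rewrite fin_sum_scal.
    assert (f x * phi x * k * fin_sum (fun y => w x y * rpow (d x y) 1) L
            <= f x * phi x * k * (C0 * mu x))
      by (apply Rmult_le_compat_l; [exact Hfpk | exact (Hint x L HL)]).
    nra.
Qed.

End TestFunction.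

Lemma pseudo_metric_lipschitz {G : Type} (d : G -> G -> R) (x y z : G) :
  pseudo_metric d -> Rabs (d x z - d y z) <= d x y.
Proof.
  intros [_ [_ [Hsym Htri]]]. apply Rabs_le.
  pose proof (Htri x y z); pose proof (Htri y x z); rewrite (Hsym y x) in *; lra.
Qed.

Lemma finite_list_within {G : Type} (d : G -> G -> R) (x0 : G) (L : list G) :
  exists r0, 0 < r0 /\ forall x, In x L -> d x x0 <= r0.
Proof.
  induction L as [|a L [r0 [Hr0 HL]]].
  - exists 1; split; [lra | intros x []].
  - exists (Rmax (d a x0) r0); split; [eapply Rlt_le_trans; [exact Hr0 | apply Rmax_r]|].
    intros x [<-|Hx]; [apply Rmax_l | eapply Rle_trans; [apply HL, Hx | apply Rmax_r]].
Qed.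

Lemma le_of_le_add_inv (a b C r0 : R) : 0 < r0 ->
  (forall r delta, r0 <= r -> 0 < delta -> a <= b + C / r + delta) -> a <= b.
Proof.
  intros Hr0 H; apply Rle_plus_epsilon; intros eps Heps.
  set (r := r0 + 2 * Rabs C / eps).
  assert (HC : 0 <= 2 * Rabs C / eps)
    by (apply Rmult_le_pos; [pose proof (Rabs_pos C); lra | left; apply Rinv_0_lt_compat; lra]).
  assert (Hr : 0 < r) by (unfold r; lra).
  assert (C / r <= eps / 2).
  { apply Rle_trans with (Rabs C / r).
    - unfold Rdiv; apply Rmult_le_compat_r; [left; now apply Rinv_0_lt_compat | apply Rle_abs].
    - apply Rmult_le_reg_r with r; [exact Hr|].
      replace (Rabs C / r * r) with (Rabs C) by (field; lra).
      replace (eps / 2 * r) with (eps * r0 / 2 + Rabs C) by (unfold r; field; lra).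
      nra. }
  specialize (H r (eps / 2) ltac:(unfold r; lra) ltac:(lra)). lra.
Qed.

Section Caccioppoli.
Context {G : Type}.
Variables (w : G -> G -> R) (mu : G -> R) (d : G -> G -> R) (f : G -> R).
Variables (C0 s c alpha : R) (x0 : G).
Hypothesis eq_dec : forall x y : G, {x = y} + {x <> y}.
Hypothesis w_ge0 : forall x y, 0 <= w x y.
Hypothesis w_sym : forall x y, w x y = w y x.
Hypothesis d_pseudo_metric : pseudo_metric d.
Hypothesis d_1_intrinsic : q_intrinsic w mu d 1 C0.
Hypothesis C0_ge0 : 0 <= C0.
Hypothesis jump_le : forall x y, 0 < w x y -> d x y <= s.
Hypothesis d_finite_balls : finite_balls d.
Hypothesis f_ge0 : forall x, 0 <= f x.
Hypothesis mu_gt0 : forall x, 0 < mu x.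
Hypothesis alpha_gt0 : 0 < alpha.
Hypothesis c_ge0 : 0 <= c.
Hypothesis f_subharmonic : forall x eps, 0 < eps -> eventually_incl (fun L =>
  c * mu x * f x - eps <= fin_sum (fun y => w x y * (f y - f x)) L).

(* Test the subharmonicity against [exp (-alpha d(., x0)) * cutoff r (d(., x0))],
   sum by parts, and bound the gradient of the test function with the 1-intrinsic metric. *)
Lemma caccioppoli_estimate (M r delta : R) (L' : list G) :
  sum_le (fun x => f x * exp (- alpha * d x x0) * mu x) M ->
  0 < r -> 0 < delta -> NoDup L' -> (forall x, In x L' -> d x x0 <= r) ->
  c * fin_sum (fun x => f x * exp (- alpha * d x x0) * mu x) L'
  <= (alpha * exp (s * alpha) + / r) * C0 * M + delta.
Proof.
  intros HM Hr Hdelta HL' HL'r.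
  pose proof d_pseudo_metric as [d_ge0 _].
  set (phi := fun x => exp (- alpha * d x x0)).
  set (psi := fun x => phi x * cutoff r (d x x0)).
  set (k := alpha * exp (s * alpha) + / r).
  assert (Hk : 0 <= k).
  { pose proof (exp_pos (s * alpha)); pose proof (Rinv_0_lt_compat r Hr).
    unfold k; nra. }
  assert (Hpsi : forall x, 0 <= psi x <= 1)
    by (intros x; apply weighted_cutoff_range; auto).
  destruct (d_finite_balls x0 (2 * r)) as [K HK].
  assert (Hsupp : forall x, psi x <> 0 -> In x K).
  { intros x Hx; apply HK. destruct (Rlt_le_dec (d x x0) (2 * r)) as [?|Hfar]; auto.
    exfalso; apply Hx; unfold psi; rewrite cutoff_outer by auto; ring. }
  destruct (eventually_incl_witness eq_dec _ L'
    (test_function_lower w mu f c psi K f_subharmonic Hpsi Hsupp delta Hdelta))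
    as [L [HL [HL'L Hlow]]].
  rewrite fin_sum_green in Hlow by exact w_sym.
  assert (Hgrad : forall x y, 0 < w x y -> psi y - psi x <= k * phi x * d x y).
  { intros x y Hxy.
    apply weighted_cutoff_increment; auto using pseudo_metric_lipschitz. }
  pose proof (test_function_upper w mu f d phi psi k C0 w_ge0 f_ge0
    ltac:(intros x; left; apply exp_pos) d_ge0 Hk d_1_intrinsic Hgrad L HL) as Hup.
  assert (Hinner : fin_sum (fun x => f x * phi x * mu x) L'
                   <= fin_sum (fun x => psi x * f x * mu x) L).
  { rewrite (fin_sum_ext _ (fun x => psi x * f x * mu x) L')
      by (intros x Hx; unfold psi; rewrite cutoff_inner by auto; ring).
    apply fin_sum_incl; auto. intros x.
    pose proof (Hpsi x); pose proof (f_ge0 x); pose proof (mu_gt0 x).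
    apply Rmult_le_pos; [apply Rmult_le_pos|]; lra. }
  assert (fin_sum (fun x => f x * phi x * mu x) L <= M) by exact (HM L HL).
  assert (k * C0 * fin_sum (fun x => f x * phi x * mu x) L <= k * C0 * M)
    by (apply Rmult_le_compat_l; [apply Rmult_le_pos|]; auto).
  assert (c * fin_sum (fun x => f x * phi x * mu x) L'
          <= c * fin_sum (fun x => psi x * f x * mu x) L)
    by (apply Rmult_le_compat_l; auto).
  change (c * fin_sum (fun x => f x * phi x * mu x) L' <= k * C0 * M + delta).
  lra.
Qed.

Lemma weighted_sum_contraction (M : R) :
  0 < c -> sum_le (fun x => f x * exp (- alpha * d x x0) * mu x) M ->
  sum_le (fun x => f x * exp (- alpha * d x x0) * mu x)
    (alpha * exp (s * alpha) * C0 / c * M).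
Proof.
  intros Hc HM L' HL'.
  destruct (finite_list_within d x0 L') as [r0 [Hr0 HL'r0]].
  apply Rmult_le_reg_l with c; [exact Hc|].
  replace (c * (alpha * exp (s * alpha) * C0 / c * M))
    with (alpha * exp (s * alpha) * C0 * M) by (field; lra).
  apply (le_of_le_add_inv _ _ (C0 * M) r0 Hr0); intros r delta Hr Hdelta.
  replace (alpha * exp (s * alpha) * C0 * M + C0 * M / r + delta)
    with ((alpha * exp (s * alpha) + / r) * C0 * M + delta) by (field; lra).
  apply caccioppoli_estimate; auto; [lra|].
  intros x Hx; specialize (HL'r0 x Hx); lra.
Qed.

End Caccioppoli.

(* The least upper bound [F] of the partial sums satisfies [F <= theta F]. *)
Lemma sum_le_contraction_zero {T : Type} (g : T -> R) (M theta : R) :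
  (forall x, 0 <= g x) -> theta < 1 -> sum_le g M ->
  (forall M', sum_le g M' -> sum_le g (theta * M')) ->
  forall x, g x = 0.
Proof.
  intros Hg Htheta HM Hcontr x.
  set (E := fun r => exists L, NoDup L /\ r = fin_sum g L).
  destruct (completeness E) as [F [HFub HFlub]].
  { exists M; intros r [L [HL ->]]; exact (HM L HL). }
  { exists 0, nil; split; [constructor | reflexivity]. }
  assert (HF : sum_le g F) by (intros L HL; apply HFub; exists L; auto).
  assert (HF0 : 0 <= F) by exact (HF nil (NoDup_nil _)).
  assert (F <= theta * F)
    by (apply HFlub; intros r [L [HL ->]]; exact (Hcontr F HF L HL)).
  assert (HF1 : fin_sum g (x :: nil) <= F)
    by (apply HF; constructor; [intros [] | constructor]).
  pose proof (Hg x); simpl in HF1; nra.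
Qed.

Lemma injective_nat_eq_dec {G : Type} (code : G -> nat) :
  (forall x y, code x = code y -> x = y) -> forall x y : G, {x = y} + {x <> y}.
Proof.
  intros Hinj x y. destruct (Nat.eq_dec (code x) (code y)) as [E|E].
  - left; exact (Hinj x y E).
  - right; intros ->; exact (E eq_refl).
Qed.

Theorem theorem3p3 (G : Type) (w : G -> G -> R) (mu : G -> R)
  (d : G -> G -> R) (C0 s : R) (V : G -> R) (c0 : R) (u : G -> R)
  (p alpha : R) (x0 : G) :
  weighted_graph w mu ->
  infinite_type G ->
  connected w ->
  pseudo_metric d ->
  intrinsic w mu d ->
  0 < C0 ->
  q_intrinsic w mu d 1 C0 ->
  jump_size w d s ->
  finite_balls d ->
  is_inf V c0 ->
  0 < c0 ->
  solves_schrodinger w mu V u ->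
  1 <= p ->
  0 < alpha ->
  C0 * alpha * exp (s * alpha) < c0 * p ->
  in_lp_weighted mu p (fun x => exp (- alpha * d x x0)) u ->
  forall x : G, u x = 0.
Proof.
  intros [[code Hcode] [Hmu [Hw [Hsym _]]]] _ _ Hd _ HC0 Hint Hjump Hball [HV _] Hc0
    Hsol Hp Halpha Hgap [M HM] x.
  set (f := fun y => rpow (Rabs (u y)) p).
  pose proof (injective_nat_eq_dec code Hcode) as Hdec.
  assert (Hf : forall y, 0 <= f y) by (intros y; apply rpow_nonneg).
  assert (Hs : forall y y', 0 < w y y' -> d y y' <= s)
    by (intros y y' Hyy'; apply (proj1 Hjump); exists y, y'; auto).
  assert (Hsub : forall y eps, 0 < eps -> eventually_incl (fun L =>
      c0 * p * mu y * f y - eps <= fin_sum (fun z => w y z * (f z - f y)) L))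
    by (intros y; apply (abs_rpow_subharmonic w mu V u); auto).
  set (theta := alpha * exp (s * alpha) * C0 / (c0 * p)).
  assert (Htheta : theta < 1)
    by (unfold theta; apply Rmult_lt_reg_r with (c0 * p); [nra|]; field_simplify; nra).
  assert (Hfx : f x * exp (- alpha * d x x0) * mu x = 0).
  { apply (sum_le_contraction_zero (fun y => f y * exp (- alpha * d y x0) * mu y) M theta);
      auto.
    - intros y; pose proof (Hf y); pose proof (exp_pos (- alpha * d y x0)); pose proof (Hmu y).
      apply Rmult_le_pos; [apply Rmult_le_pos|]; lra.
    - intros M'; apply (weighted_sum_contraction w mu d f C0 s (c0 * p) alpha x0); auto; nra. }
  pose proof (exp_pos (- alpha * d x x0)); pose proof (Hmu x).
  assert (Hf0 : f x = 0).
  { apply Rmult_integral in Hfx as [Hfx|]; [apply Rmult_integral in Hfx as [|]|]; lra. }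
  exact (rpow_abs_eq0 (u x) p Hf0).
Qed.
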